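(* Let $\mathscr{H}$ be a complex Hilbert space, $N(\cdot)$ a norm on $\mathbb{B}(\mathscr{H})$, and $B,C\in\mathbb{B}(\mathscr{H})$. Then $$\frac{1}{\sqrt2}\max\{w_N(B+C),w_N(B-C)\}\leq w_{(N,e)}(B,C)\leq\frac{1}{\sqrt2}\sqrt{w_N^2(B+C)+w_N^2(B-C)}.$$
   Context: For $T\in\mathbb{B}(\mathscr{H})$: $\Re(T)=\frac12(T+T^* )$ and $w_N(T)=\sup_{\theta\in\mathbb{R}}N(\Re(e^{i\theta}T))$. For $B,C\in\mathbb{B}(\mathscr{H})$, $w_{(N,e)}(B,C)=\sup_{\lambda_1,\lambda_2\in\mathbb{C},\ |\lambda_1|^2+|\lambda_2|^2\leq 1}\sup_{\theta\in\mathbb{R}} N(\Re(e^{i\theta}(\lambda_1B+\lambda_2C)))$. *)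

From HB Require Import structures.
From mathcomp Require Import all_boot all_order all_algebra.
From mathcomp Require Import all_classical all_reals all_analysis.
From mathcomp Require Import complex.

Set Implicit Arguments.
Unset Strict Implicit.
Unset Printing Implicit Defensive.

Import Order.TTheory GRing.Theory Num.Theory.
Local Open Scope classical_set_scope.
Local Open Scope ring_scope.

(** A complex Hilbert space is modelled by a complex vector space
    [H : lmodType R[i]] (R a real type, R[i] its complexification)
    together with an inner product [ip] (linear in the first argument,
    conjugate-linear in the second) whose induced norm is complete. *)

Section Hilbert.
Variable R : realType.
Local Notation C := R[i].
Variable H : lmodType C.
Variable ip : H -> H -> C.

Definition is_inner_product : Prop :=
  [/\ (forall (a : C) (x y z : H), ip (a *: x + y) z = a * ip x z + ip y z),
      (forall x y : H, ip x y = Num.conj (ip y x)),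
      (forall x : H, 0 <= ip x x) &
      (forall x : H, ip x x = 0 -> x = 0)].

Definition hnorm (x : H) : R := Num.sqrt (complex.Re (ip x x)).

Definition hcauchy (u : nat -> H) : Prop :=
  forall eps : R, 0 < eps -> exists N : nat,
    forall m n : nat, (N <= m)%N -> (N <= n)%N -> hnorm (u m - u n) < eps.

Definition hconverges_to (u : nat -> H) (l : H) : Prop :=
  forall eps : R, 0 < eps -> exists N : nat,
    forall n : nat, (N <= n)%N -> hnorm (u n - l) < eps.

Definition hcomplete : Prop :=
  forall u : nat -> H, hcauchy u -> exists l : H, hconverges_to u l.

Definition is_hilbert : Prop := is_inner_product /\ hcomplete.

Definition bounded_op (T : H -> H) : Prop :=
  (forall (a : C) (x y : H), T (a *: x + y) = a *: T x + T y) /\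
  (exists M : R, forall x : H, hnorm (T x) <= M * hnorm x).

Definition is_adjoint (T S : H -> H) : Prop :=
  bounded_op S /\ forall x y : H, ip (T x) y = ip x (S y).

(** T^* : the adjoint (exists and is unique for T in B(H) on a Hilbert
    space; the default branch is never used for such T). *)
Definition adjoint (T : H -> H) : H -> H :=
  match pselect (exists S, is_adjoint T S) with
  | left h => projT1 (cid h)
  | right _ => fun _ => 0
  end.

Definition op_add (S T : H -> H) : H -> H := fun x => S x + T x.
Definition op_sub (S T : H -> H) : H -> H := fun x => S x - T x.
Definition op_scale (a : C) (T : H -> H) : H -> H := fun x => a *: T x.

Definition opRe (T : H -> H) : H -> H :=
  fun x => (2%:R : C)^-1 *: (T x + adjoint T x).

Definition is_op_norm (N : (H -> H) -> R) : Prop :=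
  forall (a : C) (S T : H -> H), bounded_op S -> bounded_op T ->
  [/\ 0 <= N S,
      N S = 0 -> S = (fun _ => 0),
      N (op_scale a S) = ComplexField.Normc.normc a * N S &
      N (op_add S T) <= N S + N T].

Definition expi (t : R) : C := Complex (cos t) (sin t).

Definition wN (N : (H -> H) -> R) (T : H -> H) : R :=
  sup [set N (opRe (op_scale (expi t) T)) | t in [set: R]].

Definition wNe (N : (H -> H) -> R) (B C' : H -> H) : R :=
  sup [set r : R | exists l1 l2 : C,
         `|l1| ^+ 2 + `|l2| ^+ 2 <= 1 /\
         r = wN N (op_add (op_scale l1 B) (op_scale l2 C'))].

End Hilbert.

From HB Require Import structures.
From mathcomp Require Import all_boot all_order all_algebra.
From mathcomp Require Import all_classical all_reals all_analysis.
From mathcomp Require Import complex.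
From mathcomp Require Import ring lra.

(* Put P := B + C and Q := B - C. Every combination l1 B + l2 C equals
   al P + be Q with al := (l1 + l2) / 2 and be := (l1 - l2) / 2, and the
   parallelogram law in C gives |al|^2 + |be|^2 = (|l1|^2 + |l2|^2) / 2 <= 1/2.
   As w_N is a seminorm on bounded operators, w_N(al P + be Q) is at most
   |al| w_N(P) + |be| w_N(Q), and Cauchy-Schwarz in R^2 gives the upper bound;
   l1 = +-l2 = 1/sqrt 2 gives the lower bound.
   That w_N is a seminorm rests on T |-> T^* being additive and conjugate
   homogeneous.  As [adjoint] returns the zero operator when no adjoint
   exists, this needs the Riesz representation theorem.  The vector
   representing a bounded functional f is a multiple of the point of least
   norm of the closed hyperplane [f = 1], the limit of a minimizing sequence,
   which is Cauchy by the parallelogram law. *)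

Set Implicit Arguments.
Unset Strict Implicit.
Unset Printing Implicit Defensive.

Import Order.TTheory GRing.Theory Num.Theory ComplexField.Normc.
Local Open Scope ring_scope.

Section ScalarMap.
Variables (K : pzRingType) (V : lmodType K) (f : V -> K).
Hypothesis f_scalar : forall a x y, f (a *: x + y) = a * f x + f y.

Lemma scalar_map0 : f 0 = 0.
Proof.
have := f_scalar 1 0 0; rewrite scale1r !addr0 mul1r -{1}[f 0]addr0.
by move/addrI.
Qed.

Lemma scalar_mapD x y : f (x + y) = f x + f y.
Proof. by have := f_scalar 1 x y; rewrite scale1r mul1r. Qed.

Lemma scalar_mapZ a x : f (a *: x) = a * f x.
Proof. by have := f_scalar a x 0; rewrite !addr0 scalar_map0 addr0. Qed.

Lemma scalar_mapB x y : f (x - y) = f x - f y.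
Proof. by rewrite scalar_mapD -scaleN1r scalar_mapZ mulN1r. Qed.

End ScalarMap.

Lemma sqrtr_cauchy_schwarz2 (R : rcfType) (x y a b : R) :
  x * a + y * b <= Num.sqrt (x ^+ 2 + y ^+ 2) * Num.sqrt (a ^+ 2 + b ^+ 2).
Proof.
rewrite -sqrtrM ?addr_ge0 ?sqr_ge0 //; apply: le_trans (ler_norm _) _.
rewrite -sqrtr_sqr ler_wsqrtr //.
have -> : (x ^+ 2 + y ^+ 2) * (a ^+ 2 + b ^+ 2) =
    (x * a + y * b) ^+ 2 + (x * b - y * a) ^+ 2 by ring.
by rewrite lerDl sqr_ge0.
Qed.

Lemma inv_succ_lt_eventually (R : realType) (e : R) : 0 < e ->
  exists N : nat, forall n : nat, (N <= n)%N -> n.+1%:R^-1 < e.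
Proof.
move=> e0; exists (Num.truncn e^-1) => n Nn.
rewrite invf_plt ?posrE //; apply: lt_le_trans (truncnS_gt e^-1) _.
by rewrite ler_nat ltnS.
Qed.

Section ComplexNorm.
Variable R : realType.
Implicit Types (z w : R[i]) (r t : R).

Lemma normr_normc z : `|z| = (normc z)%:C%C.
Proof. by case: z. Qed.

Lemma normc_ge0 z : 0 <= normc z.
Proof. by case: z => a b; exact: sqrtr_ge0. Qed.

Lemma normc_real r : 0 <= r -> normc r%:C%C = r.
Proof. by move=> r0; rewrite /= expr0n addr0 sqrtr_sqr ger0_norm. Qed.

Lemma normc_nat n : normc (n%:R : R[i]) = n%:R.
Proof. by rewrite -(rmorph_nat (real_complex R)) normc_real ?ler0n. Qed.

Lemma conjC_real r : (r%:C%C)^* = r%:C%C :> R[i].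
Proof. exact: conjc_real. Qed.

Lemma normc_conj z : normc z^* = normc z.
Proof. by case: z => a b /=; rewrite sqrrN. Qed.

Lemma Re_le_normc z : complex.Re z <= normc z.
Proof.
case: z => a b /=; apply: le_trans (ler_norm a) _.
by rewrite -sqrtr_sqr ler_wsqrtr // lerDl sqr_ge0.
Qed.

Lemma normc_parallelogram z w :
  normc (z + w) ^+ 2 + normc (z - w) ^+ 2 = 2 * (normc z ^+ 2 + normc w ^+ 2).
Proof.
by case: z w => [a b] [c d] /=; rewrite !sqr_sqrtr ?addr_ge0 ?sqr_ge0 //; ring.
Qed.

Lemma sqr_normrD_le1 z w :
  (`|z| ^+ 2 + `|w| ^+ 2 <= 1) = (normc z ^+ 2 + normc w ^+ 2 <= 1).
Proof. by rewrite !normr_normc -!rmorphXn -rmorphD -(rmorph1 (real_complex R)) lecR. Qed.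

Lemma normc_expi t : normc (expi t) = 1.
Proof. by rewrite /= cos2Dsin2 sqrtr1. Qed.

Lemma normc1_expi z : normc z = 1 -> exists t, z = expi t.
Proof.
case: z => a b /= /(congr1 (fun s => s ^+ 2)).
rewrite expr1n sqr_sqrtr ?addr_ge0 ?sqr_ge0 // => ab.
have a_bnd : -1 <= a <= 1.
  rewrite -ler_norml -(@ler_pXn2r _ 2) ?nnegrE //.
  by rewrite expr1n real_normK ?num_real // -ab lerDl sqr_ge0.
have a_itv : a \in `[-1, 1] by rewrite in_itv.
have sin_b : Num.sqrt (1 - a ^+ 2) = `|b| by rewrite -ab addrC addKr sqrtr_sqr.
have [b0|b0] := lerP 0 b.
  by exists (acos a); rewrite /expi acosK // sin_acos // sin_b ger0_norm.
by exists (- acos a); rewrite /expi cosN sinN acosK // sin_acos // sin_b ltr0_norm ?opprK.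
Qed.

Lemma polar z : exists t, z = (normc z)%:C%C * expi t.
Proof.
have [->|z0] := eqVneq z 0; first by exists 0; rewrite normc0 mul0r.
have nz0 : normc z != 0 by apply: contra_neq z0 => /eq0_normc.
have [t zt] : exists t, ((normc z)^-1)%:C%C * z = expi t.
  apply: normc1_expi.
  by rewrite normcM normc_real ?invr_ge0 ?normc_ge0 // mulVf.
by exists t; rewrite -zt mulrA -rmorphM mulfV // mul1r.
Qed.

End ComplexNorm.

Section InnerProduct.
Variables (R : realType) (H : lmodType R[i]) (ip : H -> H -> R[i]).
Hypothesis ipH : is_inner_product ip.
Implicit Types (a : R[i]) (x y z k : H).
Local Notation hn := (hnorm ip).

Lemma ipZDl a x y z : ip (a *: x + y) z = a * ip x z + ip y z.
Proof. by case: ipH => + _ _ _; apply. Qed.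

Lemma ip_conj x y : ip x y = (ip y x)^*.
Proof. by case: ipH => _ + _ _; apply. Qed.

Lemma ip_self_ge0 x : 0 <= ip x x.
Proof. by case: ipH => _ _ + _; apply. Qed.

Lemma ip_self_eq0 x : ip x x = 0 -> x = 0.
Proof. by case: ipH => _ _ _; apply. Qed.

Let ip_scalarl z a x y : ip (a *: x + y) z = a * ip x z + ip y z.
Proof. exact: ipZDl. Qed.

Lemma ip0l z : ip 0 z = 0.
Proof. exact: (scalar_map0 (ip_scalarl z)). Qed.

Lemma ipDl x y z : ip (x + y) z = ip x z + ip y z.
Proof. exact: (scalar_mapD (ip_scalarl z)). Qed.

Lemma ipZl a x z : ip (a *: x) z = a * ip x z.
Proof. exact: (scalar_mapZ (ip_scalarl z)). Qed.

Lemma ipBl x y z : ip (x - y) z = ip x z - ip y z.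
Proof. exact: (scalar_mapB (ip_scalarl z)). Qed.

Lemma ip0r x : ip x 0 = 0.
Proof. by rewrite ip_conj ip0l conjC0. Qed.

Lemma ipDr x y z : ip x (y + z) = ip x y + ip x z.
Proof. by rewrite [LHS]ip_conj ipDl rmorphD (ip_conj x y) (ip_conj x z). Qed.

Lemma ipZr a x y : ip x (a *: y) = a^* * ip x y.
Proof. by rewrite [LHS]ip_conj ipZl rmorphM (ip_conj x y). Qed.

Lemma ipBr x y z : ip x (y - z) = ip x y - ip x z.
Proof. by rewrite [LHS]ip_conj ipBl rmorphB (ip_conj x y) (ip_conj x z). Qed.

Lemma ip_selfE x : ip x x = (hn x ^+ 2)%:C%C.
Proof.
have := ip_self_ge0 x; rewrite /hnorm; case: (ip x x) => a b.
by rewrite lecE /= => /andP[/eqP -> a0]; rewrite sqr_sqrtr.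
Qed.

Lemma hnorm_sqr x : hn x ^+ 2 = complex.Re (ip x x).
Proof. by rewrite ip_selfE. Qed.

Lemma hnorm_ge0 x : 0 <= hn x.
Proof. exact: sqrtr_ge0. Qed.

Lemma ip_extr y y' : (forall x, ip x y = ip x y') -> y = y'.
Proof.
move=> eq_ip; apply/eqP; rewrite -subr_eq0; apply/eqP/ip_self_eq0.
by rewrite ipBr eq_ip subrr.
Qed.

Lemma ip_self_sub_proj x y : y != 0 ->
  ip (x - (ip x y / ip y y) *: y) (x - (ip x y / ip y y) *: y) =
  ip x x - `|ip x y| ^+ 2 / ip y y.
Proof.
move=> y0; have yy0 : ip y y != 0 by apply: contra_neq y0; exact: ip_self_eq0.
have yyJ : (ip y y)^* = ip y y by rewrite geC0_conj // ip_self_ge0.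
rewrite ipBl !ipBr !ipZl !ipZr rmorphM fmorphV /= yyJ normCK (ip_conj y x).
by field.
Qed.

Lemma ip_self_gt0 y : y != 0 -> 0 < ip y y.
Proof.
move=> y0; rewrite lt_def ip_self_ge0 andbT.
by apply: contra_neq y0; exact: ip_self_eq0.
Qed.

Lemma ip_cauchy_schwarz x y : `|ip x y| ^+ 2 <= ip x x * ip y y.
Proof.
have [->|y0] := eqVneq y 0; first by rewrite !ip0r normr0 expr0n mulr0.
rewrite -ler_pdivrMr ?ip_self_gt0 // -subr_ge0 -ip_self_sub_proj //.
exact: ip_self_ge0.
Qed.

Lemma normc_ip_le x y : normc (ip x y) <= hn x * hn y.
Proof.
rewrite -(@ler_pXn2r _ 2) ?nnegrE ?normc_ge0 ?mulr_ge0 ?hnorm_ge0 //.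
rewrite -lecR rmorphXn /= -normr_normc exprMn rmorphM /= -!ip_selfE.
exact: ip_cauchy_schwarz.
Qed.

Lemma hnorm_sqrD x y :
  hn (x + y) ^+ 2 = hn x ^+ 2 + hn y ^+ 2 + 2 * complex.Re (ip x y).
Proof.
have ReD (u v : R[i]) : complex.Re (u + v) = complex.Re u + complex.Re v.
  by case: u v => [? ?] [? ?].
rewrite !hnorm_sqr ipDl !ipDr (ip_conj y x) !ReD.
have -> : complex.Re (ip x y)^* = complex.Re (ip x y) by case: (ip x y).
ring.
Qed.

Lemma hnormD x y : hn (x + y) <= hn x + hn y.
Proof.
rewrite -(@ler_pXn2r _ 2) ?nnegrE ?addr_ge0 ?hnorm_ge0 // hnorm_sqrD sqrrD.
have := le_trans (Re_le_normc (ip x y)) (normc_ip_le x y).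
lra.
Qed.

Lemma hnormZ a x : hn (a *: x) = normc a * hn x.
Proof.
apply/eqP; rewrite -(@eqrXn2 _ 2) ?mulr_ge0 ?normc_ge0 ?hnorm_ge0 //.
apply/eqP/(@complexI R); rewrite exprMn [in RHS]rmorphM /= -!ip_selfE ipZl ipZr mulrA.
by rewrite -normCK normr_normc rmorphXn.
Qed.

Lemma hnormB x y : hn (x - y) = hn (y - x).
Proof. by rewrite -opprB -[- (y - x)]scaleN1r hnormZ normcN normc1 mul1r. Qed.

Lemma hnorm_parallelogram x y :
  hn (x + y) ^+ 2 + hn (x - y) ^+ 2 = 2 * (hn x ^+ 2 + hn y ^+ 2).
Proof.
apply: (@complexI R); rewrite [in RHS]rmorphM rmorph_nat !rmorphD /= -!ip_selfE.
by rewrite ipDl ipBl !ipBr !ipDr; ring.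
Qed.

Lemma min_hnorm_orthogonal z k :
  (forall s, hn z <= hn (z - s *: k)) -> ip k z = 0.
Proof.
move=> z_min; have [->|k0] := eqVneq k 0; first exact: ip0l.
have := z_min (ip z k / ip k k).
rewrite -(@ler_pXn2r _ 2) ?nnegrE ?hnorm_ge0 // -lecR -!ip_selfE.
rewrite ip_self_sub_proj // -subr_ge0 addrAC subrr add0r oppr_ge0.
rewrite pmulr_lle0 ?invr_gt0 ?ip_self_gt0 // => zk_le0.
have : `|ip z k| ^+ 2 == 0 by rewrite eq_le zk_le0 exprn_ge0.
by rewrite sqrf_eq0 normr_eq0 => /eqP zk0; rewrite ip_conj zk0 conjC0.
Qed.

Lemma hnorm_limit_sqr_le (u : nat -> H) z c : 0 <= c ->
  (forall n, hn (u n) ^+ 2 < c + n.+1%:R^-1) -> hconverges_to ip u z ->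
  hn z ^+ 2 <= c.
Proof.
move=> c0 u_lt uz.
rewrite -(sqr_sqrtr c0) ler_pXn2r ?nnegrE ?hnorm_ge0 ?sqrtr_ge0 //.
apply/ler_addgt0Pr => e e0; have e20 : 0 < e / 2 by rewrite divr_gt0.
have [N1 close] := uz _ e20.
have [N2 small] := inv_succ_lt_eventually (exprn_gt0 2 e20).
pose n := maxn N1 N2.
have {close} close := close n (leq_maxl _ _).
have {small} small := small n (leq_maxr _ _).
have un_le : hn (u n) <= Num.sqrt c + e / 2.
  rewrite -(@ler_pXn2r _ 2) ?nnegrE ?hnorm_ge0 ?addr_ge0 ?sqrtr_ge0 ?(ltW e20) //.
  have := u_lt n; have := mulr_ge0 (sqrtr_ge0 c) (ltW e20).
  rewrite sqrrD (sqr_sqrtr c0); move: small; move: (n.+1%:R^-1 : R) => en; lra.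
have := hnormD (u n) (z - u n); rewrite [u n + _]addrC subrK hnormB.
lra.
Qed.

Lemma bounded_add S T : bounded_op ip S -> bounded_op ip T ->
  bounded_op ip (op_add S T).
Proof.
move=> [S_lin [M1 S_bd]] [T_lin [M2 T_bd]]; split.
  by move=> a x y; rewrite /op_add S_lin T_lin scalerDr addrACA.
exists (M1 + M2) => x; rewrite /op_add mulrDl.
exact: le_trans (hnormD _ _) (lerD (S_bd x) (T_bd x)).
Qed.

Lemma bounded_scale a T : bounded_op ip T -> bounded_op ip (op_scale a T).
Proof.
move=> [T_lin [M T_bd]]; split.
  by move=> b x y; rewrite /op_scale T_lin scalerDr !scalerA mulrC.
exists (normc a * M) => x; rewrite /op_scale hnormZ -mulrA.
by apply: ler_wpM2l; [exact: normc_ge0 | exact: T_bd].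
Qed.

Lemma bounded_sub S T : bounded_op ip S -> bounded_op ip T ->
  bounded_op ip (op_sub S T).
Proof.
move=> bS bT; have -> : op_sub S T = op_add S (op_scale (-1) T).
  by apply: funext => x; rewrite /op_sub /op_add /op_scale scaleN1r.
exact/bounded_add/bounded_scale.
Qed.

End InnerProduct.

Section Riesz.
Variables (R : realType) (H : lmodType R[i]) (ip : H -> H -> R[i]).
Hypotheses (ipH : is_inner_product ip) (ip_complete : hcomplete ip).
Variables (f : H -> R[i]) (M : R).
Hypothesis f_linear : forall a x y, f (a *: x + y) = a * f x + f y.
Hypothesis f_bounded : forall x, normc (f x) <= M * hnorm ip x.
Local Notation hn := (hnorm ip).
Local Open Scope classical_set_scope.

Local Notation f0 := (scalar_map0 f_linear).
Local Notation fD := (scalar_mapD f_linear).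
Local Notation fZ := (scalar_mapZ f_linear).
Local Notation fB := (scalar_mapB f_linear).

Local Notation sqr_norms := [set hn x ^+ 2 | x in [set x | f x = 1]].

Let sqr_norms_ge0 : lbound sqr_norms 0.
Proof. by move=> _ [y _ <-]; exact: sqr_ge0. Qed.

Let d := inf sqr_norms.

Let d_le x : f x = 1 -> d <= hn x ^+ 2.
Proof. by move=> fx; apply: ge_inf; [exists 0 | exists x]. Qed.

(* The midpoint of two points of [f = 1] lies in [f = 1], so the parallelogram
   law bounds their distance by the excess of their squared norms over [d]. *)
Let minimizing_cauchy (u : nat -> H) : (forall n, f (u n) = 1) ->
  (forall n, hn (u n) ^+ 2 < d + n.+1%:R^-1) -> hcauchy ip u.
Proof.
move=> fu u_lt eps eps0.
have [N small] := inv_succ_lt_eventually (divr_gt0 (exprn_gt0 2 eps0) (ltr0n _ 4)).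
exists N => m n Nm Nn.
rewrite -(@ltr_pXn2r _ 2) ?nnegrE ?hnorm_ge0 ?(ltW eps0) //.
have mid : 4 * d <= hn (u m + u n) ^+ 2.
  have := d_le (x := (2^-1 : R[i]) *: (u m + u n)).
  rewrite fZ fD !fu hnormZ // normcV normc_nat mulVf ?pnatr_eq0 //.
  by rewrite exprMn => /(_ erefl); lra.
have := hnorm_parallelogram ipH (u m) (u n).
move: (u_lt m) (u_lt n) (small m Nm) (small n Nn).
move: (m.+1%:R^-1 : R) (n.+1%:R^-1 : R) => em en; lra.
Qed.

Let level_closed (u : nat -> H) z : (forall n, f (u n) = 1) ->
  hconverges_to ip u z -> f z = 1.
Proof.
move=> fu uz; apply/eqP; rewrite eq_sym -subr_eq0; apply/eqP/eq0_normc/eqP.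
rewrite eq_le normc_ge0 andbT; apply/ler_addgt0Pr => e e0; rewrite add0r.
have K0 : 0 < `|M| + 1 by rewrite ltr_wpDl.
have [N close] := uz _ (divr_gt0 e0 K0).
have {close} close := close N (leqnn N).
have -> : 1 - f z = f (u N - z) by rewrite fB fu.
apply: le_trans (f_bounded _) _.
have : M * hn (u N - z) <= (`|M| + 1) * hn (u N - z).
  by apply: ler_wpM2r; [exact: hnorm_ge0 | rewrite (le_trans (ler_norm M)) // lerDl].
move/le_trans; apply.
by rewrite mulrC -ler_pdivlMr // ltW.
Qed.

Lemma riesz_minimizer u1 : f u1 = 1 ->
  exists2 z, f z = 1 & forall x, f x = 1 -> hn z <= hn x.
Proof.
move=> fu1.
have ne : sqr_norms !=set0 by exists (hn u1 ^+ 2), u1.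
have near_inf n : exists x, f x = 1 /\ hn x ^+ 2 < d + n.+1%:R^-1.
  have n_pos : 0 < n.+1%:R^-1 :> R by rewrite invr_gt0 ltr0Sn.
  have [_ [x fx <-] x_lt] := inf_adherent n_pos (conj ne (ex_intro _ 0 sqr_norms_ge0)).
  by exists x.
have [u hu] := choice near_inf.
have fu n := (hu n).1; have u_lt n := (hu n).2.
have [z uz] := ip_complete (minimizing_cauchy fu u_lt).
exists z; first exact: level_closed fu uz.
move=> x fx; rewrite -(@ler_pXn2r _ 2) ?nnegrE ?hnorm_ge0 //.
apply: le_trans _ (d_le fx); apply: (hnorm_limit_sqr_le ipH _ u_lt uz).
exact: lb_le_inf ne sqr_norms_ge0.
Qed.

Lemma riesz_representation : exists y, forall x, f x = ip x y.
Proof.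
have [[u fu0]|f_eq0] := pselect (exists u, f u != 0); last first.
  exists 0 => x; rewrite (ip0r ipH); apply/eqP; apply: contra_notT f_eq0 => fx.
  by exists x.
have [z fz z_min] := riesz_minimizer (u1 := (f u)^-1 *: u) ltac:(by rewrite fZ mulVf).
have orth k : f k = 0 -> ip k z = 0.
  move=> fk; apply: (min_hnorm_orthogonal ipH) => s.
  by apply: z_min; rewrite fB fZ fk mulr0 subr0.
have z0 : z != 0 by apply: contra_eq_neq fz => ->; rewrite f0 eq_sym oner_neq0.
exists ((ip z z)^-1 *: z) => x.
rewrite (ipZr ipH) geC0_conj ?invr_ge0 ?(ip_self_ge0 ipH) //.
have := orth (x - f x *: z); rewrite fB fZ fz mulr1 subrr => /(_ erefl).
rewrite (ipBl ipH) (ipZl ipH) => /eqP; rewrite subr_eq0 => /eqP ->.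
by rewrite [f x * _]mulrC mulKf // gt_eqF // (ip_self_gt0 ipH).
Qed.

End Riesz.

Section Adjoint.
Variables (R : realType) (H : lmodType R[i]) (ip : H -> H -> R[i]).
Hypotheses (ipH : is_inner_product ip) (ip_complete : hcomplete ip).
Local Notation bd := (bounded_op ip).

Lemma adjoint_exists T : bd T -> exists S, is_adjoint ip T S.
Proof.
case=> T_linear [M T_bounded].
have adj_at y : exists s, forall x, ip (T x) y = ip x s.
  apply: (riesz_representation ipH ip_complete (M := M * hnorm ip y)).
    by move=> a x x'; rewrite T_linear (ipZDl ipH).
  move=> x; apply: le_trans (normc_ip_le ipH _ _) _; rewrite mulrAC.
  by apply: ler_wpM2r; [exact: hnorm_ge0 | exact: T_bounded].
have [S hS] := choice adj_at.
exists S; split=> //; split.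
  move=> a y y'; apply: (ip_extr ipH) => x.
  by rewrite -hS !(ipDr ipH) !(ipZr ipH) -!hS.
exists M => y; have [->|Sy0] := eqVneq (hnorm ip (S y)) 0.
  exact: le_trans (hnorm_ge0 _ _) (T_bounded y).
have Sy_gt0 : 0 < hnorm ip (S y) by rewrite lt_def Sy0 hnorm_ge0.
rewrite -(ler_pM2r Sy_gt0) -expr2 (hnorm_sqr ipH) -hS.
apply: le_trans (Re_le_normc _) _; apply: le_trans (normc_ip_le ipH _ _) _.
by rewrite mulrAC; apply: ler_wpM2r; [exact: hnorm_ge0 | exact: T_bounded].
Qed.

Lemma adjointP T : bd T -> is_adjoint ip T (adjoint ip T).
Proof.
move=> bT; rewrite /adjoint; case: pselect => [h|]; first exact: projT2 (cid h).
by move/(_ (adjoint_exists bT)).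
Qed.

Lemma adjoint_eq T S : bd T -> is_adjoint ip T S -> adjoint ip T = S.
Proof.
move=> /adjointP[_ adjT] [_ adjS]; apply: funext => y; apply: (ip_extr ipH) => x.
by rewrite -adjT -adjS.
Qed.

Lemma bounded_adjoint T : bd T -> bd (adjoint ip T).
Proof. by case/adjointP. Qed.

Lemma adjointD S T : bd S -> bd T ->
  adjoint ip (op_add S T) = op_add (adjoint ip S) (adjoint ip T).
Proof.
move=> bS bT; apply: adjoint_eq; first exact: bounded_add.
split; first exact: bounded_add (bounded_adjoint bS) (bounded_adjoint bT).
move=> x y; rewrite /op_add (ipDl ipH) (ipDr ipH).
by rewrite (adjointP bS).2 (adjointP bT).2.
Qed.

Lemma adjointZ a T : bd T ->
  adjoint ip (op_scale a T) = op_scale a^* (adjoint ip T).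
Proof.
move=> bT; apply: adjoint_eq; first exact: bounded_scale.
split; first exact: bounded_scale (bounded_adjoint bT).
move=> x y; rewrite /op_scale (ipZl ipH) (ipZr ipH) conjCK.
by rewrite (adjointP bT).2.
Qed.

Lemma opReE T : opRe ip T = op_scale 2^-1 (op_add T (adjoint ip T)).
Proof. by []. Qed.

Lemma bounded_opRe T : bd T -> bd (opRe ip T).
Proof. by move=> bT; apply/bounded_scale/bounded_add/bounded_adjoint. Qed.

Lemma opReD S T : bd S -> bd T ->
  opRe ip (op_add S T) = op_add (opRe ip S) (opRe ip T).
Proof.
move=> bS bT; apply: funext => x.
by rewrite /opRe adjointD // /op_add -scalerDr addrACA.
Qed.

Lemma opReZ_real (r : R) T : bd T ->
  opRe ip (op_scale r%:C%C T) = op_scale r%:C%C (opRe ip T).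
Proof.
move=> bT; apply: funext => x.
by rewrite /opRe adjointZ // conjC_real /op_scale -scalerDr !scalerA mulrC.
Qed.

End Adjoint.

Section NumericalRadius.
Variables (R : realType) (H : lmodType R[i]) (ip : H -> H -> R[i]).
Hypotheses (ipH : is_inner_product ip) (ip_complete : hcomplete ip).
Variable N : (H -> H) -> R.
Hypothesis N_norm : is_op_norm ip N.
Local Notation bd := (bounded_op ip).
Local Open Scope classical_set_scope.

Let N_ge0 S : bd S -> 0 <= N S.
Proof. by move=> bS; case: (N_norm 0 bS bS). Qed.

Let N_scale a S : bd S -> N (op_scale a S) = normc a * N S.
Proof. by move=> bS; case: (N_norm a bS bS). Qed.

Let N_add S T : bd S -> bd T -> N (op_add S T) <= N S + N T.
Proof. by move=> bS bT; case: (N_norm 0 bS bT). Qed.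

Let bounded_rotation t T : bd T -> bd (opRe ip (op_scale (expi t) T)).
Proof. by move=> bT; exact/(bounded_opRe ipH ip_complete)/(bounded_scale ipH). Qed.

Lemma wN_has_sup T : bd T ->
  has_sup [set N (opRe ip (op_scale (expi t) T)) | t in [set: R]].
Proof.
move=> bT; split; first by exists (N (opRe ip (op_scale (expi 0) T))), 0.
exists (2^-1 * (N T + N (adjoint ip T))) => _ [t _ <-].
have bA := bounded_adjoint ipH ip_complete bT.
have bE := bounded_scale ipH (expi t) bT.
have bEA := bounded_adjoint ipH ip_complete bE.
rewrite opReE N_scale; last exact: (bounded_add ipH bE bEA).
rewrite normcV normc_nat ler_wpM2l ?invr_ge0 ?ler0n //.
apply: le_trans (N_add bE bEA) _.
rewrite (adjointZ ipH ip_complete) // !N_scale //.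
by rewrite normc_conj normc_expi !mul1r.
Qed.

Lemma wN_ub T t : bd T -> N (opRe ip (op_scale (expi t) T)) <= wN ip N T.
Proof. by move=> bT; apply: sup_upper_bound (wN_has_sup bT) _ _; exists t. Qed.

Lemma wN_le T b : (forall t, N (opRe ip (op_scale (expi t) T)) <= b) -> wN ip N T <= b.
Proof.
move=> ub; apply: ge_sup; first by exists (N (opRe ip (op_scale (expi 0) T))), 0.
by move=> _ [t _ <-].
Qed.

Lemma wN_ge0 T : bd T -> 0 <= wN ip N T.
Proof. by move=> bT; apply: le_trans (wN_ub 0 bT); exact/N_ge0/bounded_rotation. Qed.

Lemma wND S T : bd S -> bd T -> wN ip N (op_add S T) <= wN ip N S + wN ip N T.
Proof.
move=> bS bT; apply: wN_le => t.
have -> : op_scale (expi t) (op_add S T) =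
    op_add (op_scale (expi t) S) (op_scale (expi t) T).
  by apply: funext => x; rewrite /op_scale /op_add scalerDr.
rewrite (opReD ipH ip_complete); try exact: (bounded_scale ipH).
apply: le_trans (N_add (bounded_rotation t bS) (bounded_rotation t bT)) _.
by apply: lerD; exact: wN_ub.
Qed.

Lemma wNZ a T : bd T -> wN ip N (op_scale a T) = normc a * wN ip N T.
Proof.
have wNZ_le b X : bd X -> wN ip N (op_scale b X) <= normc b * wN ip N X.
  move=> bX; apply: wN_le => t; have [u polar_u] := polar (expi t * b).
  have -> : op_scale (expi t) (op_scale b X) =
      op_scale (normc (expi t * b))%:C%C (op_scale (expi u) X).
    by apply: funext => x; rewrite /op_scale !scalerA -polar_u.
  rewrite (opReZ_real ipH ip_complete); last exact: (bounded_scale ipH).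
  have bR := bounded_rotation u bX.
  rewrite N_scale // normc_real ?normc_ge0 // normcM normc_expi mul1r.
  by rewrite ler_wpM2l ?normc_ge0 // wN_ub.
move=> bT; apply/eqP; rewrite eq_le wNZ_le //=.
have [->|a0] := eqVneq a 0.
  by rewrite normc0 mul0r; exact/wN_ge0/(bounded_scale ipH).
have := wNZ_le a^-1 _ (bounded_scale ipH a bT).
have -> : op_scale a^-1 (op_scale a T) = T.
  by apply: funext => x; rewrite /op_scale scalerA mulVf ?scale1r.
rewrite normcV -ler_pdivlMl ?invr_gt0 ?lt_def ?normc_ge0 ?andbT //.
by apply: contra_neq a0 => /eq0_normc.
Qed.

End NumericalRadius.

Section CombinedNumericalRadius.
Variables (R : realType) (H : lmodType R[i]) (ip : H -> H -> R[i]).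
Hypotheses (ipH : is_inner_product ip) (ip_complete : hcomplete ip).
Variable N : (H -> H) -> R.
Hypothesis N_norm : is_op_norm ip N.
Variables B C : H -> H.
Hypotheses (bB : bounded_op ip B) (bC : bounded_op ip C).
Local Notation wN := (wN ip N).
Local Notation combination l1 l2 := (op_add (op_scale l1 B) (op_scale l2 C)).
Local Notation sqrt2_bound :=
  ((Num.sqrt 2)^-1 * Num.sqrt (wN (op_add B C) ^+ 2 + wN (op_sub B C) ^+ 2)).
Local Open Scope classical_set_scope.

Let bP : bounded_op ip (op_add B C) := bounded_add ipH bB bC.
Let bQ : bounded_op ip (op_sub B C) := bounded_sub ipH bB bC.

Lemma wN_combination_le (l1 l2 : R[i]) : `|l1| ^+ 2 + `|l2| ^+ 2 <= 1 ->
  wN (combination l1 l2) <= sqrt2_bound.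
Proof.
rewrite sqr_normrD_le1 => l_le1.
pose al := (l1 + l2) / 2; pose be := (l1 - l2) / 2.
have -> : combination l1 l2 =
    op_add (op_scale al (op_add B C)) (op_scale be (op_sub B C)).
  apply: funext => x; rewrite /op_add /op_scale /op_sub scalerDr scalerBr addrACA.
  by rewrite -scalerDl -scalerBl /al /be; congr (_ *: _ + _ *: _); field.
have bP' := bounded_scale ipH al bP; have bQ' := bounded_scale ipH be bQ.
apply: le_trans (wND ipH ip_complete N_norm bP' bQ') _.
rewrite !(wNZ ipH ip_complete N_norm) //.
apply: le_trans (sqrtr_cauchy_schwarz2 _ _ _ _) _.
rewrite ler_wpM2r ?sqrtr_ge0 // -sqrtrV ?ler0n // ler_wsqrtr //.
rewrite /al /be !normcM normcV normc_nat !exprMn.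
have := normc_parallelogram l1 l2; lra.
Qed.

Lemma wNe_le : wNe ip N B C <= sqrt2_bound.
Proof.
apply: ge_sup; last by move=> _ [l1 [l2 [l_le1 ->]]]; exact: wN_combination_le.
exists (wN (combination 0 0)), 0, 0; split=> //.
by rewrite normr0 expr0n add0r ler01.
Qed.

Lemma wN_le_wNe (l1 l2 : R[i]) : `|l1| ^+ 2 + `|l2| ^+ 2 <= 1 ->
  wN (combination l1 l2) <= wNe ip N B C.
Proof.
move=> l_le1; apply: sup_upper_bound; last by exists l1, l2.
split; first by exists (wN (combination l1 l2)), l1, l2.
by exists sqrt2_bound => _ [k1 [k2 [k_le1 ->]]]; exact: wN_combination_le.
Qed.

Lemma max_le_wNe :
  (Num.sqrt 2)^-1 * Num.max (wN (op_add B C)) (wN (op_sub B C)) <= wNe ip N B C.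
Proof.
have s0 : 0 <= (Num.sqrt 2 : R)^-1 by rewrite invr_ge0 sqrtr_ge0.
pose l : R[i] := ((Num.sqrt 2)^-1)%:C%C.
have nl : normc l = (Num.sqrt 2)^-1 by rewrite normc_real.
have lNl_le1 : `|l| ^+ 2 + `|- l| ^+ 2 <= 1.
  by rewrite sqr_normrD_le1 normcN nl exprVn sqr_sqrtr ?ler0n //; lra.
have ll_le1 : `|l| ^+ 2 + `|l| ^+ 2 <= 1 by rewrite -{2}(normrN l).
rewrite maxr_pMr // ge_max -nl -!(wNZ ipH ip_complete N_norm) //; apply/andP; split.
  have -> : op_scale l (op_add B C) = combination l l.
    by apply: funext => x; rewrite /op_add /op_scale scalerDr.
  exact: wN_le_wNe.
have -> : op_scale l (op_sub B C) = combination l (- l).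
  by apply: funext => x; rewrite /op_add /op_scale /op_sub scalerBr scaleNr.
exact: wN_le_wNe.
Qed.

End CombinedNumericalRadius.

Theorem theorem2p7 (R : realType) (H : lmodType R[i]) (ip : H -> H -> R[i])
    (N : (H -> H) -> R) (B C : H -> H) :
  is_hilbert ip -> is_op_norm ip N -> bounded_op ip B -> bounded_op ip C ->
  (Num.sqrt 2)^-1 * Num.max (wN ip N (op_add B C)) (wN ip N (op_sub B C))
    <= wNe ip N B C /\
  wNe ip N B C <= (Num.sqrt 2)^-1 *
    Num.sqrt (wN ip N (op_add B C) ^+ 2 + wN ip N (op_sub B C) ^+ 2).
Proof.
move=> [ipH ip_complete] N_norm bB bC; split.
  exact: (max_le_wNe ipH ip_complete N_norm bB bC).
exact: (wNe_le ipH ip_complete N_norm bB bC).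
Qed.
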